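(* Let $\vec r\in\mathbb Z^n$. For every $\sigma\in H_{\vec r}$ and $\tau,\rho\in S_n$, $$\vartheta_{\vec r}(\sigma\tau,\rho)=\vartheta_{\vec r}(\sigma,\tau\rho)\,\vartheta_{\vec r}(\tau,\rho).$$
   Context: $n\ge2$, $\theta\in M_n(\mathbb R)$ skew-symmetric, $\omega_{ij}=e^{2\pi i\theta_{ij}}$. $S_n$ acts on $\mathbb Z^n$ by $\sigma\vec r=(r_{\sigma^{-1}(1)},\dots,r_{\sigma^{-1}(n)})$; $H_{\vec r}=\{\sigma\in S_n:\sigma\vec r=\vec r\}$. For $\sigma,\tau\in S_n$: $\vartheta_{\vec r}(\sigma,\tau)=\prod_{i<j,\ \sigma(i)>\sigma(j)}(\omega_{\tau^{-1}(j),\tau^{-1}(i)})^{r_{\sigma(i)}r_{\sigma(j)}}$. *)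

From HB Require Import structures.
From mathcomp Require Import all_boot all_order all_algebra all_fingroup.
From mathcomp Require Import reals trigo.
From mathcomp.real_closed Require Import complex.
Set Implicit Arguments. Unset Strict Implicit. Unset Printing Implicit Defensive.
Import Order.TTheory GRing.Theory Num.Theory.
Local Open Scope ring_scope.

(* Indices {1,..,n} are rendered as 'I_n = {0,..,n-1}; S_n = 'S_n = {perm 'I_n}. *)

(* omega_{ij} = e^{2 pi i theta_{ij}} = cos(2 pi theta_ij) + i sin(2 pi theta_ij) *)
Definition omega (R : realType) (n : nat) (theta : 'M[R]_n) (i j : 'I_n)
  : complex R :=
  (cos (2 * pi * theta i j) +i* sin (2 * pi * theta i j))%C.

(* Composition sigma tau of permutations as functions: (sigma tau)(x) = sigma (tau x).
   Note: in MathComp, (s * t)%g x = t (s x), hence sigma o tau = (tau * sigma)%g. *)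
Definition scomp (n : nat) (s t : 'S_n) : 'S_n := (t * s)%g.

Definition pact (n : nat) (s : 'S_n) (r : 'I_n -> int) : 'I_n -> int :=
  fun i => r ((s^-1)%g i).

Definition Hstab (n : nat) (r : 'I_n -> int) : {set 'S_n} :=
  [set s : 'S_n | [forall i, pact s r i == r i]].

Definition vartheta (R : realType) (n : nat) (theta : 'M[R]_n)
  (r : 'I_n -> int) (s t : 'S_n) : complex R :=
  \prod_(p : 'I_n * 'I_n | (p.1 < p.2)%N && (s p.2 < s p.1)%N)
     (omega theta ((t^-1)%g p.2) ((t^-1)%g p.1)) ^ (r (s p.1) * r (s p.2)).

From HB Require Import structures.
From mathcomp Require Import all_boot all_order all_algebra all_fingroup.
From mathcomp Require Import reals trigo.
From mathcomp.real_closed Require Import complex.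
Import GRing.Theory Num.Theory.
Local Open Scope ring_scope.
Set Implicit Arguments. Unset Strict Implicit. Unset Printing Implicit Defensive.

(* For injective rankings a, b of a finite set and a weight F on ordered pairs
   with F(i,j) F(j,i) = 1, let inv_prod a b F be the product of F(i,j) over the
   pairs (i,j) ordered by a and reversed by b.  Checking each unordered pair
   {i,j} separately gives the cocycle identity
     inv_prod a c F = inv_prod a b F * inv_prod b c F.
   For sigma in H_r the exponents r_{sigma(i)} r_{sigma(j)} only see r, and after
   reindexing vartheta_r(sigma, tau rho) along tau the three factors of the
   lemma become inv_prod for the rankings (id, sigma tau), (tau, sigma tau) and
   (id, tau) of a single weight built from rho and r o tau; this weight is
   antisymmetric because theta is skew-symmetric. *)

Section InversionProduct.

Variables (T : finType) (C : comPzSemiRingType).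
Implicit Types (a b c : T -> nat) (F G : T * T -> C).

Definition inv_prod a b F : C :=
  \prod_(p : T * T | (a p.1 < a p.2)%N && (b p.2 < b p.1)%N) F p.

Lemma eq_inv_prod a a' b b' F G :
  a =1 a' -> b =1 b' -> F =1 G -> inv_prod a b F = inv_prod a' b' G.
Proof.
by move=> eq_a eq_b eq_F; apply: eq_big => [p|p _]; rewrite ?eq_a ?eq_b.
Qed.

Lemma inv_prod_reindex (t : {perm T}) a b F :
  inv_prod a b F
  = inv_prod (a \o t) (b \o t) (fun p => F (t p.1, t p.2)).
Proof.
have t2_inj : injective (fun p : T * T => (t p.1, t p.2)).
  by move=> [x y] [x' y'] /= [/perm_inj -> /perm_inj ->].
by rewrite /inv_prod (reindex_inj t2_inj).
Qed.

Lemma prod_pairs_oriented a G : injective a -> (forall x, G (x, x) = 1) ->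
  \prod_p G p = \prod_(p : T * T | (a p.1 < a p.2)%N) (G p * G (p.2, p.1)).
Proof.
move=> a_inj G_diag.
rewrite (bigID (fun p : T * T => (a p.1 < a p.2)%N)) big_split /=.
congr (_ * _).
rewrite (bigID (fun p : T * T => p.1 == p.2)) /= big1 ?mul1r; last first.
  by move=> [x y] /andP[_ /eqP /= ->].
have swap_inv : involutive (fun p : T * T => (p.2, p.1)) by case.
rewrite (reindex_inj (inv_inj swap_inv)) /=.
apply: eq_bigl => -[x y] /=.
case: (ltngtP (a x) (a y)) => [lt_xy|//|/a_inj ->]; last by rewrite eqxx.
by apply: contraTneq lt_xy => ->; rewrite ltnn.
Qed.

Lemma inv_prod_pairs a b c F : injective a ->
  inv_prod b c F
  = \prod_(p : T * T | (a p.1 < a p.2)%N)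
      ((if (b p.1 < b p.2)%N && (c p.2 < c p.1)%N then F p else 1)
       * (if (b p.2 < b p.1)%N && (c p.1 < c p.2)%N then F (p.2, p.1) else 1)).
Proof.
move=> a_inj; rewrite /inv_prod big_mkcond (prod_pairs_oriented a_inj) //.
by move=> x; rewrite ltnn.
Qed.

Lemma inv_prod_trans a b c F :
  injective a -> injective b -> injective c ->
  (forall i j, F (i, j) * F (j, i) = 1) ->
  inv_prod a c F = inv_prod a b F * inv_prod b c F.
Proof.
move=> a_inj b_inj c_inj F_anti.
rewrite !(inv_prod_pairs _ _ _ a_inj) -big_split /=.
apply: eq_bigr => -[i j] /= lt_ij.
have neq_ij : i != j by apply: contraTneq lt_ij => ->; rewrite ltnn.
have -> : (a j < a i)%N = false by rewrite ltnNge ltnW.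
rewrite lt_ij /=.
case: (ltngtP (b i) (b j)) => [lt_b|lt_b|/b_inj eq_b] /=.
- by rewrite !mul1r.
- case: (ltngtP (c i) (c j)) => [lt_c|lt_c|/c_inj eq_c] /=.
  + by rewrite !(mul1r, mulr1) F_anti.
  + by rewrite !(mul1r, mulr1).
  + by rewrite eq_c eqxx in neq_ij.
- by rewrite eq_b eqxx in neq_ij.
Qed.

End InversionProduct.

Lemma omega_antisym (R : realType) (n : nat) (theta : 'M[R]_n)
    (i j : 'I_n) : theta^T = - theta ->
  omega theta i j * omega theta j i = 1.
Proof.
move=> htheta; rewrite /omega.
have -> : theta j i = - theta i j.
  by have := congr1 (fun M : 'M[R]_n => M i j) htheta; rewrite !mxE.
rewrite mulrN cosN sinN; set c := cos _; set s := sin _.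
apply/eqP; rewrite eq_complex /=; apply/andP; split; apply/eqP.
  by rewrite -(cos2Dsin2 (2 * pi * theta i j)) !expr2 mulrN opprK.
by rewrite mulrN mulrC addNr.
Qed.

Definition vartheta_factor (R : realType) (n : nat) (theta : 'M[R]_n)
    (r : 'I_n -> int) (t : 'S_n) (p : 'I_n * 'I_n) : complex R :=
  omega theta ((t^-1)%g p.2) ((t^-1)%g p.1) ^ (r p.1 * r p.2).

Lemma vartheta_factor_antisym (R : realType) (n : nat) (theta : 'M[R]_n)
    (r : 'I_n -> int) (t : 'S_n) (i j : 'I_n) : theta^T = - theta ->
  vartheta_factor theta r t (i, j) * vartheta_factor theta r t (j, i) = 1.
Proof.
by move=> htheta; rewrite /vartheta_factor /= [r j * _]mulrC -expfzMl
  omega_antisym // exp1rz.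
Qed.

Lemma vartheta_factor_scomp (R : realType) (n : nat) (theta : 'M[R]_n)
    (r : 'I_n -> int) (tau rho : 'S_n) (i j : 'I_n) :
  vartheta_factor theta r (scomp tau rho) (tau i, tau j)
  = vartheta_factor theta (r \o tau) rho (i, j).
Proof. by rewrite /vartheta_factor /scomp /= invMg !permM !permK. Qed.

Lemma vartheta_inv_prod (R : realType) (n : nat) (theta : 'M[R]_n)
    (r : 'I_n -> int) (s t : 'S_n) :
  vartheta theta r s t
  = inv_prod (@nat_of_ord n) (@nat_of_ord n \o s)
      (vartheta_factor theta (r \o s) t).
Proof. by []. Qed.

Lemma scompE (n : nat) (s t : 'S_n) (i : 'I_n) : scomp s t i = s (t i).
Proof. by rewrite /scomp permM. Qed.

Lemma Hstab_fix (n : nat) (r : 'I_n -> int) (s : 'S_n) (i : 'I_n) :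
  s \in Hstab r -> r (s i) = r i.
Proof. by rewrite inE => /forallP /(_ (s i)) /eqP; rewrite /pact permK. Qed.

Theorem lemma4p10 (R : realType) (n : nat) (hn : (2 <= n)%N)
  (theta : 'M[R]_n) (htheta : theta^T = - theta)
  (r : 'I_n -> int) (sigma tau rho : 'S_n) (hsigma : sigma \in Hstab r) :
  vartheta theta r (scomp sigma tau) rho
  = vartheta theta r sigma (scomp tau rho) * vartheta theta r tau rho.
Proof.
pose F := vartheta_factor theta (r \o tau) rho.
have ord_inj (s : 'S_n) : injective (@nat_of_ord n \o s).
  exact: inj_comp val_inj (@perm_inj _ s).
have -> : vartheta theta r (scomp sigma tau) rho
          = inv_prod (@nat_of_ord n) (@nat_of_ord n \o sigma \o tau) F.
  rewrite vartheta_inv_prod; apply: eq_inv_prod => [//|i|[i j]] /=.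
    by rewrite scompE.
  by rewrite /F /vartheta_factor /= !scompE !(Hstab_fix _ hsigma).
have -> : vartheta theta r sigma (scomp tau rho)
          = inv_prod (@nat_of_ord n \o tau) (@nat_of_ord n \o sigma \o tau) F.
  rewrite vartheta_inv_prod (inv_prod_reindex tau (@nat_of_ord n)).
  apply: eq_inv_prod => [//|//|[i j]].
  rewrite vartheta_factor_scomp /F /vartheta_factor /=.
  by rewrite !(Hstab_fix _ hsigma).
rewrite mulrC (vartheta_inv_prod _ _ tau); apply: inv_prod_trans.
- exact: val_inj.
- exact: ord_inj.
- exact: inj_comp (ord_inj sigma) perm_inj.
- by move=> i j; apply: vartheta_factor_antisym.
Qed.
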